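(* Let $\mathcal{G}=(V,E)$ be a hypergraph on $n$ vertices. Then for every nonempty $S\subset V$, $$(r(\mathcal{G})-1)\frac{\lambda_n(L_{\mathcal{G}})\,|S|\,|V\setminus S|}{n}\ \ge\ |\partial S|\ \ge\ \frac{cr(\mathcal{G})-1}{\lfloor r(\mathcal{G})^2/4\rfloor}\,\frac{\lambda_2(L_{\mathcal{G}})\,|S|\,|V\setminus S|}{n}.$$
   Context: A hypergraph $\mathcal{G}=(V,E)$ has a finite vertex set $V$ and a set $E$ of subsets of $V$ (edges), each of cardinality at least $2$. The rank $r(\mathcal{G})$ and co-rank $cr(\mathcal{G})$ are the maximum and minimum edge cardinalities. The degree $d_i$ is the number of edges containing $i$. The Laplacian $L_{\mathcal{G}}$ is the matrix with $(L_{\mathcal{G}})_{ii}=d_i$ and $(L_{\mathcal{G}})_{ij}=-\sum_{e\in E,\, i,j\in e}\frac{1}{|e|-1}$ for $i\ne j$; its eigenvalues are $\lambda_1(L_{\mathcal{G}})\le\dots\le\lambda_n(L_{\mathcal{G}})$. The edge boundary $\partial S$ is the set of edges containing a vertex of $S$ and a vertex of $V\setminus S$. *)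

From HB Require Import structures.
From mathcomp Require Import all_boot all_order all_algebra.
Set Implicit Arguments. Unset Strict Implicit. Unset Printing Implicit Defensive.
Import Order.TTheory GRing.Theory Num.Theory.
Local Open Scope ring_scope.

(* A hypergraph on vertex set 'I_n is given by its edge set E : {set {set 'I_n}};
   the hypothesis that every edge has cardinality >= 2 is stated in the theorem. *)

Definition hdeg (n : nat) (E : {set {set 'I_n}}) (i : 'I_n) : nat :=
  #|[set e in E | i \in e]|.

Definition hlaplacian (R : fieldType) (n : nat) (E : {set {set 'I_n}}) : 'M[R]_n :=
  \matrix_(i, j)
    if i == j then (hdeg E i)%:R
    else - \sum_(e in E | (i \in e) && (j \in e)) ((#|e|.-1)%:R)^-1.

Definition hrank (n : nat) (E : {set {set 'I_n}}) : nat := \max_(e in E) #|e|.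

(* co-rank cr(G) : minimum edge cardinality (default n irrelevant when E <> empty,
   since every edge has at most n elements) *)
Definition hcorank (n : nat) (E : {set {set 'I_n}}) : nat :=
  \big[minn/n]_(e in E) #|e|.

Definition hboundary (n : nat) (E : {set {set 'I_n}}) (S : {set 'I_n}) :=
  [set e in E | (e :&: S != set0) && (e :\: S != set0)].

(* s is the list of eigenvalues (with algebraic multiplicity) of A in
   nondecreasing order: lambda_k = s`_(k-1) *)
Definition sorted_eigenvalues (R : rcfType) (n : nat) (A : 'M[R]_n) (s : seq R) :=
  [/\ size s = n, sorted <=%R s & char_poly A = \prod_(x <- s) ('X - x%:P)].

From HB Require Import structures.
From mathcomp Require Import all_boot all_order all_algebra.
From mathcomp Require Import ring lra zify.
From mathcomp.real_closed Require Import complex.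
Import Order.TTheory GRing.Theory Num.Theory.
Local Open Scope ring_scope.
Local Open Scope sesquilinear_scope.

(* Write L for the hypergraph Laplacian.  Its quadratic form splits over the edges,
     x^T L x = sum_e 1/(|e| - 1) * sum_(i, j in e) (x_i - x_j)^2 / 2,
   so L is positive semidefinite and kills the constant vector.  The centred indicator
   x = 1_S - |S|/n is orthogonal to that vector, |x|^2 = |S| |V \ S| / n, and an edge e
   contributes a_e b_e / (|e| - 1) to x^T L x, where a_e = |e :&: S| and b_e = |e :\: S|.
   The Rayleigh bounds lambda_2 |x|^2 <= x^T L x <= lambda_n |x|^2 are compared with the
   boundary edge by edge: a_e b_e >= a_e + b_e - 1 when e crosses S, whereas
   a_e b_e <= floor(r^2 / 4) and |e| - 1 >= cr - 1. *)

Lemma sum_sum_subr_mul (R : comNzRingType) (I : finType) (A : {pred I}) (a b : I -> R) :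
  \sum_(i in A) \sum_(j in A) (a i - a j) * (b i - b j) =
  2 * (#|A|%:R * \sum_(i in A) a i * b i - (\sum_(i in A) a i) * \sum_(i in A) b i).
Proof.
have expand i j : (a i - a j) * (b i - b j) = a i * b i + a j * b j - (a i * b j + a j * b i).
  by ring.
have diag : \sum_(i in A) \sum_(j in A) a i * b i = #|A|%:R * \sum_(i in A) a i * b i.
  by rewrite mulr_sumr; apply: eq_bigr => i _; rewrite sumr_const mulr_natl.
under eq_bigr => i _ do rewrite (eq_bigr _ (fun j _ => expand i j)) sumrB !big_split /=.
rewrite sumrB !big_split /= [X in _ + X - _]exchange_big [X in _ - (_ + X)]exchange_big /=.
rewrite diag -big_distrlr /=.
ring.
Qed.

Lemma sum_indicator (R : pzSemiRingType) (T : finType) (B : {set T}) :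
  \sum_i ((i \in B)%:R : R) = #|B|%:R.
Proof. by rewrite -sumr_const [RHS]big_mkcond; apply: eq_bigr => i _; case: (i \in B). Qed.

Lemma sum_indicatorI (R : pzSemiRingType) (T : finType) (A B : {set T}) :
  \sum_(i in A) ((i \in B)%:R : R) = #|A :&: B|%:R.
Proof.
by rewrite -sum_indicator big_mkcond; apply: eq_bigr => i _; rewrite inE; case: (i \in A).
Qed.

Lemma bilinear_mxE (R : pzSemiRingType) n (u : 'rV[R]_n) (M : 'M[R]_n) (w : 'cV[R]_n) :
  (u *m M *m w) 0 0 = \sum_i \sum_j u 0 i * M i j * w j 0.
Proof.
rewrite mxE (eq_bigr (fun j => \sum_i u 0 i * M i j * w j 0)) => [|j _].
  exact: exchange_big.
by rewrite mxE mulr_suml.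
Qed.

Lemma pred_addn_leq_muln a b : (0 < a -> 0 < b -> (a + b).-1 <= a * b)%N.
Proof. nia. Qed.

Lemma muln_leq_sqr_div4 a b r : (a + b <= r -> a * b <= r ^ 2 %/ 4)%N.
Proof.
move=> le_r; rewrite leq_divRL // mulnC.
by apply: leq_trans (leq_of_leqif (nat_AGM2 a b)) _; rewrite leq_exp2r.
Qed.

Lemma nth_le_last_sorted (R : realDomainType) (s : seq R) x :
  sorted <=%R s -> x \in s -> x <= s`_(size s).-1.
Proof.
move=> s_sorted xs; rewrite -(nth_index 0 xs).
have s_gt0 : (0 < size s)%N by case: (s) xs.
apply: (sorted_leq_nth le_trans lexx 0 s_sorted); rewrite ?unfold_in /= ?index_mem ?prednK //.
by rewrite -ltnS prednK // index_mem.
Qed.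

Lemma count_lt_nth1_sorted (R : realDomainType) (s : seq R) :
  sorted <=%R s -> (count (fun x => (x < s`_1)%R) s <= 1)%N.
Proof.
case: s => [|a0 [|a1 t]] //= => [_|/andP[_ path_t]]; first by rewrite addn0 leq_b1.
rewrite ltxx add0n (eq_in_count (a2 := pred0)) ?count_pred0 ?addn0 ?leq_b1 // => x xt /=.
by apply/negbTE; rewrite -leNgt; move/allP: (order_path_min le_trans path_t); apply.
Qed.

Lemma bigminn_le (I : eqType) (r : seq I) (P : pred I) (F : I -> nat) x0 i :
  i \in r -> P i -> (\big[minn/x0]_(j <- r | P j) F j <= F i)%N.
Proof.
elim: r => // j r IHr; rewrite inE big_cons => /predU1P[<- ->|ir Pi]; first exact: geq_minl.
by case: (P j); [apply: leq_trans (geq_minr _ _) _|]; apply: IHr.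
Qed.

Section HermitianSpectral.
Context {C : numClosedFieldType} {n : nat} {A : 'M[C]_n}.
Hypothesis A_herm : A \is hermsymmx.
Local Notation P := (spectralmx A).
Local Notation d := (spectral_diag A).

Lemma spectralmx_mul_tr : P *m P^t* = 1%:M.
Proof. exact/unitarymxP/spectral_unitarymx. Qed.

Lemma spectralmx_tr_mul : P^t* *m P = 1%:M.
Proof. exact/mulmx1C/spectralmx_mul_tr. Qed.

Lemma hermitian_spectral_decomposition : A = P^t* *m diag_mx d *m P.
Proof.
rewrite -invmx_unitary ?spectral_unitarymx //.
exact/orthomx_spectralP/hermitian_normalmx.
Qed.

Lemma char_poly_hermitian : char_poly A = \prod_i ('X - (d 0 i)%:P).
Proof.
have <- : char_poly (diag_mx d) = \prod_i ('X - (d 0 i)%:P).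
  by rewrite char_poly_trig ?diag_mx_is_trig //; apply: eq_bigr => i _; rewrite mxE eqxx mulr1n.
have eA : char_poly_mx A = map_mx polyC (P^t*) *m char_poly_mx (diag_mx d) *m map_mx polyC P.
  rewrite /char_poly_mx mulmxBr mulmxBl -!map_mxM -hermitian_spectral_decomposition.
  by rewrite mul_mx_scalar -scalemxAl -map_mxM spectralmx_tr_mul map_mx1 scalemx1.
rewrite /char_poly eA !det_mulmx mulrC mulrA -det_mulmx -map_mxM spectralmx_mul_tr.
by rewrite map_mx1 det1 mul1r.
Qed.

Lemma perm_eq_spectral_diag (t : seq C) : char_poly A = \prod_(x <- t) ('X - x%:P) ->
  perm_eq t [seq d 0 i | i <- enum 'I_n].
Proof.
by move=> charA; apply: prod_XsubC_eq; rewrite -charA char_poly_hermitian big_map big_enum.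
Qed.

Lemma hermitian_form_spectral (v : 'rV[C]_n) :
  (v *m A *m v^t*) 0 0 = \sum_i d 0 i * `|(v *m P^t*) 0 i| ^+ 2.
Proof.
have -> : v *m A *m v^t* = (v *m P^t*) *m diag_mx d *m (v *m P^t*)^t*.
  by rewrite {1}hermitian_spectral_decomposition !trmx_mul !map_mxM trmxCK !mulmxA.
by rewrite mxE; apply: eq_bigr => i _; rewrite mul_mx_diag !mxE normCK mulrAC mulrC.
Qed.

Lemma norm_spectral (v : 'rV[C]_n) : (v *m v^t*) 0 0 = \sum_i `|(v *m P^t*) 0 i| ^+ 2.
Proof.
have -> : v *m v^t* = (v *m P^t*) *m (v *m P^t*)^t*.
  by rewrite !trmx_mul !map_mxM trmxCK !mulmxA -(mulmxA v) spectralmx_tr_mul mulmx1.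
by rewrite mxE; apply: eq_bigr => i _; rewrite !mxE normCK.
Qed.

Lemma hermitian_form_le (M : C) (v : 'rV[C]_n) : (forall i, d 0 i <= M) ->
  (v *m A *m v^t*) 0 0 <= M * (v *m v^t*) 0 0.
Proof.
move=> le_dM; rewrite hermitian_form_spectral norm_spectral mulr_sumr.
by apply: ler_sum => i _; apply: ler_wpM2r (le_dM i); rewrite exprn_ge0.
Qed.

Lemma hermitian_psd_spectral_ge0 : (forall v : 'rV[C]_n, 0 <= (v *m A *m v^t*) 0 0) ->
  forall i, 0 <= d 0 i.
Proof.
move=> psd i; have := psd (row i P).
rewrite hermitian_form_spectral -row_mul spectralmx_mul_tr row1.
rewrite (bigD1 i) //= big1 ?addr0 => [|j ne_ji].
  by rewrite !mxE !eqxx normr1 expr1n mulr1.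
by rewrite !mxE (negbTE ne_ji) andbF normr0 expr0n mulr0.
Qed.

Lemma hermitian_kernel_coord (u : 'rV[C]_n) j :
  u *m A = 0 -> d 0 j != 0 -> (u *m P^t*) 0 j = 0.
Proof.
move=> uA0 dj_neq0; have : u *m P^t* *m diag_mx d = 0.
  have : u *m A *m P^t* = 0 by rewrite uA0 mul0mx.
  rewrite [in u *m A]hermitian_spectral_decomposition !mulmxA -(mulmxA _ P).
  by rewrite spectralmx_mul_tr mulmx1.
move/rowP/(_ j); rewrite mul_mx_diag !mxE => /eqP.
by rewrite mulf_eq0 (negbTE dj_neq0) orbF => /eqP.
Qed.

(* If only the eigenvalue d_i0 lies below m, every other eigenvalue is positive, so the
   kernel vector u lies along the i0-th eigenvector and v, orthogonal to u, has no
   component on it. *)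
Lemma hermitian_form_ge_orth_kernel (m : C) (u v : 'rV[C]_n) :
  m \is Num.real -> (forall i : 'I_n, 0 <= d 0 i) -> (#|[pred i : 'I_n | (d 0 i < m)%R]| <= 1)%N ->
  u != 0 -> u *m A = 0 -> v *m u^t* = 0 ->
  m * (v *m v^t*) 0 0 <= (v *m A *m v^t*) 0 0.
Proof.
move=> m_real d_ge0 /card_le1_eqP lt_m_unique u_neq0 uA0 vu0.
have ge_m (i : 'I_n) : ~~ (d 0 i < m) -> m <= d 0 i.
  have /mxOverP d_real := hermitian_spectral_diag_real A_herm.
  by rewrite real_leNgt ?d_real.
rewrite hermitian_form_spectral norm_spectral mulr_sumr.
have [i0 /= lt_i0 | no_lt] := pickP [pred i | d 0 i < m]; last first.
  by apply: ler_sum => i _; apply: ler_wpM2r (ge_m i (negbT (no_lt i))); rewrite exprn_ge0.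
have ge_m_off (j : 'I_n) : j != i0 -> m <= d 0 j.
  by move=> ne_ji0; apply: ge_m; apply: contra ne_ji0 => lt_j; rewrite (lt_m_unique i0 j).
have z_off (j : 'I_n) : j != i0 -> (u *m P^t*) 0 j = 0.
  move=> ne_ji0; apply: hermitian_kernel_coord => //; rewrite gt_eqF //.
  exact: le_lt_trans (d_ge0 i0) (lt_le_trans lt_i0 (ge_m_off j ne_ji0)).
have uE : u = (u *m P^t*) *m P by rewrite -mulmxA spectralmx_tr_mul mulmx1.
have yz0 : (v *m P^t*) *m (u *m P^t*)^t* = 0.
  by rewrite trmx_mul map_mxM trmxCK mulmxA -(mulmxA v) spectralmx_tr_mul mulmx1.
move: (v *m P^t*) (u *m P^t*) z_off uE yz0 => y z z_off uE yz0.
have z_i0 : z 0 i0 != 0.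
  apply: contra u_neq0 => /eqP z_i0; rewrite uE; apply/eqP.
  rewrite -[RHS](mul0mx _ P); congr (_ *m _).
  by apply/rowP => j; rewrite mxE; case: (eqVneq j i0) => [->|/z_off].
have y_i0 : y 0 i0 = 0.
  move/rowP/(_ 0): yz0; rewrite !mxE (bigD1 i0) //= big1 ?addr0 => [|j ne_ji0]; last first.
    by rewrite !mxE z_off // conjC0 mulr0.
  by rewrite !mxE => /eqP; rewrite mulf_eq0 conjC_eq0 (negbTE z_i0) orbF => /eqP.
apply: ler_sum => i _; have [->|ne_ii0] := eqVneq i i0.
  by rewrite y_i0 normr0 expr0n !mulr0.
by apply: ler_wpM2r (ge_m_off i ne_ii0); rewrite exprn_ge0.
Qed.

End HermitianSpectral.

Section RealComplex.
Context {R : rcfType}.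
Local Notation toC := (real_complex R).

Lemma real_complex_real (x : R) : toC x \is Num.real.
Proof. by apply/complex_realP; exists x. Qed.

Lemma map_real_complex_mul_trC p q m (X : 'M[R]_(p, m)) (Y : 'M[R]_(q, m)) :
  map_mx toC X *m (map_mx toC Y)^t* = map_mx toC (X *m Y^T).
Proof.
rewrite map_mxM; congr (_ *m _); apply/matrixP => i j.
by rewrite !mxE conj_Creal ?real_complex_real.
Qed.

End RealComplex.

Definition hcut (K : fieldType) {n} (E : {set {set 'I_n}}) (S : {set 'I_n}) : K :=
  \sum_(e in E) (#|e :&: S| * #|e :\: S|)%:R / (#|e|.-1)%:R.

Definition centered_indicator (K : fieldType) {n} (S : {set 'I_n}) : 'rV[K]_n :=
  \row_i ((i \in S)%:R - #|S|%:R / n%:R).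

Lemma map_hlaplacian {K K' : fieldType} (f : {rmorphism K -> K'}) n (E : {set {set 'I_n}}) :
  map_mx f (hlaplacian K E) = hlaplacian K' E.
Proof.
apply/matrixP => i j; rewrite !mxE; case: eqVneq => _; first exact: rmorph_nat.
by rewrite rmorphN rmorph_sum; congr (- _); apply: eq_bigr => e _; rewrite fmorphV rmorph_nat.
Qed.

Lemma tr_hlaplacian (K : fieldType) n (E : {set {set 'I_n}}) : (hlaplacian K E)^T = hlaplacian K E.
Proof.
apply/matrixP => i j; rewrite !mxE eq_sym; case: eqVneq => [->|_] //.
by congr (- _); apply: eq_bigl => e; rewrite (andbC (j \in e)).
Qed.

Lemma hlaplacian_hermsymmx (C : numClosedFieldType) {n} (E : {set {set 'I_n}}) :
  hlaplacian C E \is hermsymmx.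
Proof.
by apply/is_hermitianmxP; rewrite expr0 scale1r -map_trmx map_hlaplacian tr_hlaplacian.
Qed.

Section Laplacian.
Context {K : numFieldType} {n : nat} {E : {set {set 'I_n}}}.
Hypothesis hE : forall e, e \in E -> (2 <= #|e|)%N.
Local Notation L := (hlaplacian K E).

Lemma edge_weight_pred e : e \in E -> (#|e|%:R - 1) / (#|e|.-1)%:R = 1 :> K.
Proof.
move=> eE; have e_gt1 := hE e eE.
have pred_neq0 : (#|e|.-1)%:R != 0 :> K by rewrite pnatr_eq0 -lt0n -ltnS prednK // ltnW.
have -> : #|e|%:R - 1 = (#|e|.-1)%:R :> K by rewrite -subn1 natrB // ltnW.
exact: divff.
Qed.

Lemma hlaplacianE i j : L i j =
  \sum_(e in E | (i \in e) && (j \in e)) ((i == j)%:R * #|e|%:R - 1) / (#|e|.-1)%:R.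
Proof.
rewrite mxE; case: eqVneq => [<-|_]; last first.
  by rewrite -sumrN; apply: eq_bigr => e _; rewrite mul0r sub0r mulNr mul1r.
rewrite (eq_bigr (fun _ => 1)) => [|e /andP[eE _]]; last by rewrite mul1r edge_weight_pred.
rewrite /hdeg -sum1_card natr_sum.
by apply: eq_big => [e|e _]; rewrite ?inE ?andbb.
Qed.

Lemma hlaplacian_bilinear (a b : 'I_n -> K) :
  \sum_i \sum_j a i * L i j * b j =
  \sum_(e in E) (#|e|%:R * \sum_(i in e) a i * b i - (\sum_(i in e) a i) * \sum_(i in e) b i)
                / (#|e|.-1)%:R.
Proof.
pose F (e : {set 'I_n}) (i j : 'I_n) := a i * (((i == j)%:R * #|e|%:R - 1) / (#|e|.-1)%:R) * b j.
have edge (e : {set 'I_n}) : \sum_(i in e) \sum_(j in e) F e i j =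
    (#|e|%:R * \sum_(i in e) a i * b i - (\sum_(i in e) a i) * \sum_(i in e) b i) / (#|e|.-1)%:R.
  have row i : i \in e ->
      \sum_(j in e) F e i j = (#|e|%:R * (a i * b i) - a i * \sum_(j in e) b j) / (#|e|.-1)%:R.
    move=> ie; rewrite (eq_bigr (fun j => ((i == j)%:R * #|e|%:R * (a i * b j) - a i * b j)
                                          / (#|e|.-1)%:R)) => [|j _]; last by rewrite /F; ring.
    rewrite -mulr_suml sumrB -mulr_sumr (bigD1 i ie) /= eqxx mul1r big1 ?addr0 //.
    move=> j /andP[_ ne_ji].
    by rewrite eq_sym (negbTE ne_ji) !mul0r.
  under eq_bigr => i ie do rewrite row //.
  by rewrite -mulr_suml sumrB -mulr_sumr -mulr_suml.
rewrite -(eq_bigr _ (fun e _ => edge e)); symmetry.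
rewrite (eq_bigr (fun e : {set 'I_n} =>
    \sum_i \sum_j if (i \in e) && (j \in e) then F e i j else 0)) => [|e _].
  rewrite exchange_big; apply: eq_bigr => i _; rewrite exchange_big; apply: eq_bigr => j _.
  by rewrite hlaplacianE mulr_sumr mulr_suml big_mkcondr.
rewrite big_mkcond; apply: eq_bigr => i _; rewrite big_mkcond.
by case: (i \in e) => //=; rewrite big1_eq.
Qed.

Lemma hlaplacian_form_diff (a b : 'I_n -> K) :
  2 * \sum_i \sum_j a i * L i j * b j =
  \sum_(e in E) (\sum_(i in e) \sum_(j in e) (a i - a j) * (b i - b j)) / (#|e|.-1)%:R.
Proof.
rewrite hlaplacian_bilinear mulr_sumr; apply: eq_bigr => e _.
by rewrite sum_sum_subr_mul mulrA.
Qed.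

Lemma hlaplacian_sum_col j : \sum_i L i j = 0.
Proof.
have -> : \sum_i L i j = \sum_i \sum_k 1 * L i k * (k == j)%:R.
  apply: eq_bigr => i _; rewrite (bigD1 j) //= eqxx mulr1 mul1r big1 ?addr0 // => k ne_kj.
  by rewrite (negbTE ne_kj) mulr0.
rewrite hlaplacian_bilinear big1 // => e _.
have -> : \sum_(i in e) (1 : K) = #|e|%:R by rewrite sumr_const.
have -> : \sum_(i in e) 1 * ((i == j)%:R : K) = \sum_(i in e) (i == j)%:R.
  by apply: eq_bigr => i _; rewrite mul1r.
by rewrite subrr mul0r.
Qed.

Lemma const1_mul_hlaplacian : (const_mx 1 : 'rV[K]_n) *m L = 0.
Proof.
apply/rowP => j; rewrite !mxE -[RHS](hlaplacian_sum_col j).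
by apply: eq_bigr => i _; rewrite mxE mul1r.
Qed.

Lemma hlaplacian_centered_form (S : {set 'I_n}) :
  let x := centered_indicator K S in (x *m L *m x^T) 0 0 = hcut K E S.
Proof.
move=> x; apply: (@mulfI _ 2); first by rewrite pnatr_eq0.
rewrite bilinear_mxE hlaplacian_form_diff /hcut mulr_sumr.
apply: eq_bigr => e _; rewrite mulrA; congr (_ / _).
pose c i : K := (i \in S)%:R.
rewrite (eq_bigr (fun i => \sum_(j in e) (c i - c j) * (c i - c j))) => [|i _]; last first.
  by apply: eq_bigr => j _; rewrite !mxE; congr (_ * _); ring.
rewrite sum_sum_subr_mul (eq_bigr c) => [|i _]; last first.
  by rewrite /c; case: (i \in S); rewrite ?mulr1 ?mulr0.
rewrite sum_indicatorI -(cardsID S e) natrD !natrM; ring.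
Qed.

Lemma centered_indicator_norm (S : {set 'I_n}) : (0 < n)%N ->
  let x := centered_indicator K S in (x *m x^T) 0 0 = #|S|%:R * #|~: S|%:R / n%:R.
Proof.
move=> n_gt0 x; have n_neq0 : n%:R != 0 :> K by rewrite pnatr_eq0 -lt0n.
pose c := #|S|%:R / n%:R : K.
rewrite mxE (eq_bigr (fun i => (i \in S)%:R * (1 - 2 * c) + c ^+ 2)) => [|i _]; last first.
  by rewrite !mxE /c; case: (i \in S); rewrite /= ?mulr1n ?mulr0n; ring.
rewrite big_split /= -mulr_suml sum_indicator sumr_const card_ord.
have hn : n%:R = #|S|%:R + #|~: S|%:R :> K by rewrite -natrD cardsC card_ord.
by rewrite -[c ^+ 2 *+ n]mulr_natr /c hn in n_neq0 *; field.
Qed.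

Lemma centered_indicator_orth (S : {set 'I_n}) : (0 < n)%N ->
  centered_indicator K S *m (const_mx 1 : 'rV[K]_n)^T = 0.
Proof.
move=> n_gt0; have n_neq0 : n%:R != 0 :> K by rewrite pnatr_eq0 -lt0n.
apply/rowP => k; rewrite !mxE.
rewrite (eq_bigr (fun i => (i \in S)%:R - #|S|%:R / n%:R)) => [|i _]; last by rewrite !mxE mulr1.
by rewrite sumrB sumr_const card_ord -[_ / _ *+ n]mulr_natr divfK // sum_indicator subrr.
Qed.

End Laplacian.

Lemma hlaplacian_psd {C : numClosedFieldType} {n} (E : {set {set 'I_n}}) :
  (forall e, e \in E -> (2 <= #|e|)%N) ->
  forall v : 'rV[C]_n, 0 <= (v *m hlaplacian C E *m v^t*) 0 0.
Proof.
move=> hE v; rewrite -(@pmulr_rge0 _ 2) // bilinear_mxE hlaplacian_form_diff //.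
apply: sumr_ge0 => e _; apply: divr_ge0 (ler0n _ _).
apply: sumr_ge0 => i _; apply: sumr_ge0 => j _.
by rewrite !mxE -rmorphB; exact: mul_conjC_ge0.
Qed.

Lemma card_hboundary_sum (K : pzSemiRingType) n (E : {set {set 'I_n}}) (S : {set 'I_n}) :
  (#|hboundary E S|%:R : K) = \sum_(e in E) (e \in hboundary E S)%:R.
Proof.
rewrite sum_indicatorI (setIidPr _) //.
by apply/subsetP => e; rewrite inE => /andP[].
Qed.

Section Boundary.
Context (K : numFieldType) {n : nat} {E : {set {set 'I_n}}} (S : {set 'I_n}).
Hypothesis hE : forall e, e \in E -> (2 <= #|e|)%N.

Lemma pred_card_edge_gt0 e : e \in E -> 0 < (#|e|.-1)%:R :> K.
Proof. by move=> eE; rewrite ltr0n -ltnS prednK ?hE // ltnW ?hE. Qed.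

Lemma card_hboundary_le_hcut : (#|hboundary E S|%:R : K) <= hcut K E S.
Proof.
rewrite card_hboundary_sum /hcut; apply: ler_sum => e eE.
rewrite inE eE -!card_gt0 /=; case: andP => [[a_gt0 b_gt0]|_]; last by rewrite divr_ge0 ?ler0n.
rewrite ler_pdivlMr ?pred_card_edge_gt0 // mul1r ler_nat -(cardsID S e).
exact: pred_addn_leq_muln.
Qed.

Lemma hcut_mul_le {c F : nat} :
  (forall e, e \in E -> c <= #|e|)%N -> (forall e, e \in E -> #|e :&: S| * #|e :\: S| <= F)%N ->
  hcut K E S * (c.-1)%:R <= #|hboundary E S|%:R * F%:R.
Proof.
move=> le_c le_F; rewrite card_hboundary_sum /hcut !mulr_suml; apply: ler_sum => e eE.
rewrite inE eE -!card_gt0 /=.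
case: (posnP #|e :&: S|) => [->|a_gt0]; first by rewrite mul0n !mul0r.
case: (posnP #|e :\: S|) => [->|b_gt0]; first by rewrite muln0 !mul0r.
rewrite mul1r mulrAC ler_pdivrMr ?pred_card_edge_gt0 // -!natrM ler_nat.
by rewrite leq_mul ?le_F // -!subn1 leq_sub2r ?le_c.
Qed.

End Boundary.

Section Rank.
Context {n : nat} {E : {set {set 'I_n}}}.

Lemma card_le_hrank {e} : e \in E -> (#|e| <= hrank E)%N.
Proof. exact: leq_bigmax_cond. Qed.

Lemma hcorank_le_card {e} : e \in E -> (hcorank E <= #|e|)%N.
Proof. by move=> eE; apply: bigminn_le; rewrite ?mem_index_enum. Qed.

Lemma hcorank_ge2 : (2 <= n)%N -> (forall e, e \in E -> (2 <= #|e|)%N) -> (2 <= hcorank E)%N.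
Proof.
by move=> n_ge2 hE; apply: (big_ind (fun m => 2 <= m)%N) => // x y x_ge2; rewrite leq_min x_ge2.
Qed.

End Rank.

(* The spectral theorem of MathComp is stated over a numClosedFieldType: the real
   Laplacian is studied through its image over R[i]. *)
Section CutRayleigh.
Context {R : rcfType} {n : nat} {E : {set {set 'I_n}}} (S : {set 'I_n}) {s : seq R}.
Hypothesis hE : forall e, e \in E -> (2 <= #|e|)%N.
Hypothesis hs : sorted_eigenvalues (hlaplacian R E) s.
Hypothesis n_gt0 : (0 < n)%N.
Local Notation toC := (real_complex R).
Local Notation A := (hlaplacian R[i] E).
Local Notation d := (spectral_diag A).
Local Notation v := (map_mx toC (centered_indicator R S)).
Local Notation X := (#|S|%:R * #|~: S|%:R / n%:R : R).

Lemma perm_eq_hlaplacian_spectral : perm_eq (map toC s) [seq d 0 i | i <- enum 'I_n].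
Proof.
have [_ _ charL] := hs; apply: perm_eq_spectral_diag; first exact: hlaplacian_hermsymmx.
rewrite -(map_hlaplacian toC) -map_char_poly charL rmorph_prod big_map.
by apply: eq_bigr => x _; rewrite rmorphB /= map_polyX map_polyC.
Qed.

Lemma hlaplacian_spectral_diag i : exists2 r, r \in s & d 0 i = toC r.
Proof.
have := perm_mem perm_eq_hlaplacian_spectral (d 0 i).
by rewrite map_f ?mem_enum // => /mapP[r rs ->]; exists r.
Qed.

Lemma centered_form_complex : (v *m A *m v^t*) 0 0 = toC (hcut R E S).
Proof.
by rewrite -(map_hlaplacian toC) -map_mxM map_real_complex_mul_trC mxE hlaplacian_centered_form.
Qed.

Lemma centered_norm_complex : (v *m v^t*) 0 0 = toC X.
Proof. by rewrite map_real_complex_mul_trC mxE centered_indicator_norm. Qed.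

Lemma hcut_le_lambda_max : hcut R E S <= s`_(n.-1) * X.
Proof.
have [size_s sorted_s _] := hs.
rewrite -lecR; have -> : toC (s`_(n.-1) * X) = toC s`_(n.-1) * toC X by rewrite rmorphM.
rewrite -centered_form_complex -centered_norm_complex.
apply: hermitian_form_le; first exact: hlaplacian_hermsymmx.
move=> i; have [r rs ->] := hlaplacian_spectral_diag i.
by rewrite lecR -size_s nth_le_last_sorted.
Qed.

Lemma lambda2_le_hcut : s`_1 * X <= hcut R E S.
Proof.
have [_ sorted_s _] := hs; have A_herm := hlaplacian_hermsymmx R[i] E.
rewrite -lecR; have -> : toC (s`_1 * X) = toC s`_1 * toC X by rewrite rmorphM.
rewrite -centered_norm_complex -centered_form_complex.
apply: (@hermitian_form_ge_orth_kernel _ _ _ A_herm _ (const_mx 1)).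
- exact: real_complex_real.
- exact: hermitian_psd_spectral_ge0 A_herm (hlaplacian_psd _ hE).
- have -> : #|[pred i | d 0 i < toC s`_1]| =
      count (fun z => z < toC s`_1) [seq d 0 i | i <- enum 'I_n].
    by rewrite count_map -sum1_count -sum1_card big_enum_cond.
  rewrite -(permP perm_eq_hlaplacian_spectral) count_map.
  by rewrite (eq_count (a2 := fun x => x < s`_1)) ?count_lt_nth1_sorted // => x /=; rewrite ltcR.
- by apply/eqP => /rowP/(_ (Ordinal n_gt0)); rewrite !mxE; apply/eqP; exact: oner_neq0.
- exact: const1_mul_hlaplacian.
have -> : const_mx 1 = map_mx toC (const_mx 1 : 'rV[R]_n) by rewrite map_const_mx rmorph1.
by rewrite map_real_complex_mul_trC centered_indicator_orth // map_mx0.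
Qed.

End CutRayleigh.

Theorem theorem6 (R : rcfType) (n : nat) (E : {set {set 'I_n}})
    (hE : forall e, e \in E -> (2 <= #|e|)%N) (hEne : E != set0)
    (s : seq R) (hs : sorted_eigenvalues (hlaplacian R E) s)
    (S : {set 'I_n}) (hS : S != set0) :
  ((hrank E)%:R - 1) * (s`_(n.-1) * #|S|%:R * #|~: S|%:R / n%:R)
     >= (#|hboundary E S|%:R : R)
  /\ (#|hboundary E S|%:R : R)
     >= ((hcorank E)%:R - 1) / ((hrank E ^ 2) %/ 4)%:R
        * (s`_1 * #|S|%:R * #|~: S|%:R / n%:R).
Proof.
have [e0 e0E] := set0Pn _ hEne.
have n_ge2 : (2 <= n)%N by rewrite -[X in (_ <= X)%N]card_ord (leq_trans (hE _ e0E)) ?max_card.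
have n_gt0 : (0 < n)%N by apply: ltnW.
have rank_ge2 : (2 <= hrank E)%N := leq_trans (hE _ e0E) (card_le_hrank e0E).
have corank_ge2 := hcorank_ge2 n_ge2 hE.
have split_le e : e \in E -> (#|e :&: S| * #|e :\: S| <= hrank E ^ 2 %/ 4)%N.
  by move=> eE; apply: muln_leq_sqr_div4; rewrite cardsID card_le_hrank.
have hub := hcut_le_lambda_max S hE hs n_gt0.
have hlb := lambda2_le_hcut S hE hs n_gt0.
have hb1 := card_hboundary_le_hcut R S hE.
have hb2 := hcut_mul_le R S hE (@hcorank_le_card _ _) split_le.
rewrite !mulrA in hub hlb; split.
  have rank1 : 1 <= (hrank E)%:R - 1 :> R.
    have : 2 <= (hrank E)%:R :> R by rewrite ler_nat.
    lra.
  apply: le_trans (le_trans hb1 hub) _; apply: ler_peMl rank1.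
  exact: le_trans (le_trans (ler0n _ _) hb1) hub.
have F_gt0 : (0 < hrank E ^ 2 %/ 4)%N by rewrite divn_gt0 //; nia.
have corank1 : ((hcorank E).-1)%:R = (hcorank E)%:R - 1 :> R by rewrite -subn1 natrB // ltnW.
rewrite mulrAC ler_pdivrMr ?ltr0n // -corank1; apply: le_trans hb2.
by rewrite [leLHS]mulrC; apply: ler_wpM2r; rewrite ?ler0n ?hlb.
Qed.
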